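(* Let $n\ge3$, let the sites of an $n$-qubit chain be partitioned as $L=\{1,\dots,a\}$, $C=\{a+1\}$, $R=\{a+2,\dots,n\}$ with $L,R$ nonempty, and let $W\in\mathrm{Sp}(2n,\mathbb{Z}_2)$ be the symplectic matrix of a Clifford unitary that is an irreducible $1$-wall around $C$. Then $G_{\mathrm{left}}=G_{\mathrm{right}}$, and this subspace has dimension $1$; i.e. it corresponds to the group $\{\mathbb{1},\sigma\}$ generated by a single traceless single-qubit Pauli matrix $\sigma$ on site $a+1$.
   Context: Pauli operators modulo phases are identified with $\mathbb{Z}_2^{2n}$ via $(p_1,q_1,\dots,p_n,q_n)\mapsto X^{p_1}Z^{q_1}\otimes\cdots\otimes X^{p_n}Z^{q_n}$; symplectic form $J=\bigoplus_{i=1}^n\begin{pmatrix}0&1\\1&0\end{pmatrix}$; $\mathrm{Sp}(2n,\mathbb{Z}_2)=\{S:SJS^T=J\}$. $V_S$ denotes vectors supported on the site set $S$, $\mathbb{Z}_2^{2n}=V_L\oplus V_C\oplus V_R$, vectors $(l,c,r)$, $\pi_C$ the projection onto $V_C$. Left wall condition around $C$: for all $t\ge1$, $l\in V_L$: $W^t(l,0,0)\in V_L\oplus V_C\oplus\{0\}$. $W$ is an irreducible $1$-wall around $C$ if it satisfies the left wall condition around $C$ and contains no smaller wall, i.e. neither $W^t V_L\subseteq V_L$ for all $t\ge1$ nor $W^t(V_L\oplus V_C)\subseteq V_L\oplus V_C$ for all $t\ge1$. Internal subspaces: $G_{\mathrm{left}}=\pi_C(\mathrm{span}\{W^t(l,0,0):t\ge0,l\in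 V_L\})$, $G_{\mathrm{right}}=\pi_C(\mathrm{span}\{W^t(0,0,r):t\ge0,r\in V_R\})$. *)

From HB Require Import structures.
From mathcomp Require Import all_boot all_order all_algebra.
From mathcomp Require Import boolp.
Set Implicit Arguments. Unset Strict Implicit. Unset Printing Implicit Defensive.
Import GRing.Theory.
Local Open Scope ring_scope.

(* Pauli vectors mod phases: column vectors in F_2^{2n}; coordinate k (0-based)
   belongs to site (k %/ 2) (0-based), i.e. site k %/ 2 + 1 in 1-based numbering;
   coordinate 2s is p_{s+1}, coordinate 2s+1 is q_{s+1}. *)
Notation pvec n := 'cV['F_2]_(2 * n).
Notation pmat n := 'M['F_2]_(2 * n).

Definition site {n} (k : 'I_(2 * n)) : nat := k %/ 2.

Definition Jform (n : nat) : pmat n :=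
  \matrix_(i, j) ((site i == site j) && (i != j))%:R.

Definition symplectic n (S : pmat n) : Prop := S *m Jform n *m S^T = Jform n.

(* Partition (1-based sites): L = {1..a}, C = {a+1}, R = {a+2..n}.
   In 0-based site numbering: L = sites < a, C = site a, R = sites > a. *)
Definition inL {n} (a : nat) (k : 'I_(2 * n)) : bool := (site k < a)%N.
Definition inC {n} (a : nat) (k : 'I_(2 * n)) : bool := (site k == a)%N.
Definition inR {n} (a : nat) (k : 'I_(2 * n)) : bool := (a < site k)%N.

Definition supported {n} (S : pred 'I_(2 * n)) (v : pvec n) : bool :=
  [forall k, ~~ S k ==> (v k 0 == 0)].

Definition V_L {n} a (v : pvec n) := supported (inL a) v.
Definition V_LC {n} a (v : pvec n) := supported (fun k => inL a k || inC a k) v.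
Definition V_R {n} a (v : pvec n) := supported (inR a) v.

Definition left_wall {n} (a : nat) (W : pmat n) : Prop :=
  forall t : nat, (1 <= t)%N -> forall l : pvec n, V_L a l -> V_LC a (W ^+ t *m l).

Definition irreducible_wall {n} (a : nat) (W : pmat n) : Prop :=
  [/\ left_wall a W,
      ~ (forall t : nat, (1 <= t)%N -> forall l : pvec n, V_L a l -> V_L a (W ^+ t *m l))
    & ~ (forall t : nat, (1 <= t)%N -> forall v : pvec n, V_LC a v -> V_LC a (W ^+ t *m v))].

Definition span_of {n} (P : pvec n -> Prop) : {vspace pvec n} :=
  <<enum [set v : pvec n | `[< P v >] ]>>%VS.

Definition projC_mx {n} (a : nat) : pmat n :=
  \matrix_(i, j) ((i == j) && inC a i)%:R.

Definition G_left {n} (a : nat) (W : pmat n) : {vspace pvec n} :=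
  (linfun (mulmx (projC_mx a)) @:
     span_of (fun v => exists (t : nat) (l : pvec n), V_L a l /\ v = W ^+ t *m l))%VS.

Definition G_right {n} (a : nat) (W : pmat n) : {vspace pvec n} :=
  (linfun (mulmx (projC_mx a)) @:
     span_of (fun v => exists (t : nat) (r : pvec n), V_R a r /\ v = W ^+ t *m r))%VS.

From HB Require Import structures.
From mathcomp Require Import all_boot all_order all_algebra.
From mathcomp Require Import boolp zify.
Set Implicit Arguments. Unset Strict Implicit. Unset Printing Implicit Defensive.
Import GRing.Theory.
Local Open Scope ring_scope.

(* The symplectic form [sform] is invariant under W, and W has finite order, so
   every W^-t is a positive power of W.  Hence the left wall condition dualises:
   W^t maps V_R into V_C + V_R, and sform (W^s l) (W^t r) = sform (W^(s+k) l) r = 0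
   since W^(s+k) l lies in V_L + V_C.  Only C-coordinates contribute to this form,
   so G_left and G_right are sform-orthogonal.  Irreducibility makes both nonzero:
   G_left = 0 would keep V_L invariant, and G_right = 0 would keep V_R invariant,
   hence by duality V_L + V_C too.  On V_C = F_2^2 the form is hyperbolic, and two
   nonzero orthogonal vectors of F_2^2 coincide, so both spaces are the same line. *)

Lemma mx_period (R : finComUnitRingType) m (A B : 'M[R]_m) :
  A *m B = 1%:M -> exists2 p, (0 < p)%N & A ^+ p = 1.
Proof.
move=> /mulmx1C BA1.
have injA : injective (@mulmx _ m m m A).
  by move=> X Y /(congr1 (mulmx B)); rewrite !mulmxA BA1 !mul1mx.
have iterA k : iter k (@mulmx _ m m m A) 1%:M = A ^+ k.
  by elim: k => [|k IHk] /=; rewrite ?expr0 // IHk exprS mulmxE.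
exists (order (@mulmx _ m m m A) 1%:M); first exact: order_gt0.
by rewrite -iterA iter_order.
Qed.

Lemma vspace_eq_vline (K : fieldType) (vT : vectType K) (U : {vspace vT}) x0 :
  x0 \in U -> (forall x, x \in U -> x != 0 -> x = x0) -> U = <[x0]>%VS.
Proof.
move=> Ux0 eq_x0; apply/eqP; rewrite eqEsubv -memvE Ux0 andbT.
apply/subvP => x Ux; have [->|nz_x] := eqVneq x 0; first exact: mem0v.
by rewrite (eq_x0 x) ?memv_line.
Qed.

Lemma F2_cases (z : 'F_2) : z = 0 \/ z = 1.
Proof. by case: z => [[|[|m]] lt_m_2]; [left|right|]; try apply: val_inj. Qed.

Lemma F2_hyperbolic_orth (a0 a1 b0 b1 : 'F_2) :
  (a0 != 0) || (a1 != 0) -> (b0 != 0) || (b1 != 0) -> a0 * b1 + a1 * b0 = 0 ->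
  a0 = b0 /\ a1 = b1.
Proof.
by case: (F2_cases a0) => ->; case: (F2_cases a1) => ->;
  case: (F2_cases b0) => ->; case: (F2_cases b1) => ->.
Qed.

Section Symplectic.
Variable n : nat.
Implicit Types (i j k : 'I_(2 * n)) (u v x y : pvec n) (W : pmat n).

Lemma partner_subproof i : (2 * (i %/ 2) + (1 - i %% 2) < 2 * n)%N.
Proof. by case: i => i /= ?; lia. Qed.

(* The other coordinate of the site of [i]: [p_s <-> q_s]. *)
Definition partner i : 'I_(2 * n) := Ordinal (partner_subproof i).

Lemma partnerK : involutive partner.
Proof. by move=> i; apply: val_inj; case: i => i /= ?; lia. Qed.

Lemma partner_neq i : partner i != i.
Proof. by rewrite -val_eqE; case: i => i /= ?; apply/eqP; lia. Qed.

Lemma site_partner i : site (partner i) = site i.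
Proof. by rewrite /site; case: i => i /= ?; lia. Qed.

Lemma same_site_cases i j : site i = site j -> i = j \/ i = partner j.
Proof.
case: i j => [i ?] [j ?]; rewrite /site /= => eq_site.
have [] : (i = j \/ i = 2 * (j %/ 2) + (1 - j %% 2))%N by lia.
  by move=> eq_ij; left; apply: val_inj.
by move=> eq_ij; right; apply: val_inj.
Qed.

Lemma JformE i j : Jform n i j = (j == partner i)%:R.
Proof.
rewrite mxE; congr (nat_of_bool _)%:R; case: i j => [i ?] [j ?]; rewrite -!val_eqE /site /=.
by apply/idP/idP => [/andP[/eqP ? /eqP ?]|/eqP ?];
  [apply/eqP | apply/andP; split; apply/eqP]; lia.
Qed.

Lemma mulJmxE m (X : 'M['F_2]_(2 * n, m)) i c : (Jform n *m X) i c = X (partner i) c.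
Proof.
rewrite mxE (bigD1 (partner i)) //= JformE eqxx mul1r big1 ?addr0 // => j /negbTE neq.
by rewrite JformE neq mul0r.
Qed.

Lemma mulJJ : Jform n *m Jform n = 1%:M.
Proof. by apply/matrixP => i j; rewrite mulJmxE JformE partnerK !mxE eq_sym. Qed.

Definition sform u v : 'F_2 := (u^T *m Jform n *m v) 0 0.

Lemma sformE u v : sform u v = \sum_i u i 0 * v (partner i) 0.
Proof. by rewrite /sform -mulmxA mxE; apply: eq_bigr => i _; rewrite mxE mulJmxE. Qed.

Lemma sformC u v : sform u v = sform v u.
Proof.
rewrite !sformE (reindex_inj (can_inj partnerK)) /=.
by apply: eq_bigr => i _; rewrite partnerK mulrC.
Qed.

Lemma sform_eq0 u v : (sform u v == 0) = (u^T *m Jform n *m v == 0).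
Proof.
rewrite /sform; apply/eqP/eqP => [uv0 | ->]; last by rewrite mxE.
by apply/matrixP => i j; rewrite !ord1 uv0 mxE.
Qed.

Lemma sform_deltal k v : sform (delta_mx (partner k) 0) v = v k 0.
Proof.
rewrite sformE (bigD1 (partner k)) //= mxE !eqxx partnerK mul1r big1 ?addr0 //.
by move=> i /negbTE neq; rewrite mxE neq mul0r.
Qed.

Lemma sform_span_orthr x (Y : seq (pvec n)) :
  (forall y, y \in Y -> sform x y = 0) -> forall y, y \in <<Y>>%VS -> sform x y = 0.
Proof.
move=> xY; have /subvP sub : (<<Y>> <= lker (linfun (mulmx (x^T *m Jform n))))%VS.
  by apply/span_subvP => y Yy; rewrite memv_ker lfunE -sform_eq0 xY.
by move=> y /sub; rewrite memv_ker lfunE -sform_eq0 => /eqP.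
Qed.

Lemma sform_span_orth (X Y : seq (pvec n)) :
  (forall x y, x \in X -> y \in Y -> sform x y = 0) ->
  forall x y, x \in <<X>>%VS -> y \in <<Y>>%VS -> sform x y = 0.
Proof.
move=> XY x y Xx Yy; rewrite sformC; apply: sform_span_orthr Xx => x' Xx'.
by rewrite sformC; apply: sform_span_orthr Yy => y' Yy'; apply: XY.
Qed.

Lemma symplectic_trmx W : symplectic W -> W^T *m Jform n *m W = Jform n.
Proof.
move=> WJWt; have /mulmx1C : W *m (Jform n *m W^T *m Jform n) = 1%:M.
  by rewrite !mulmxA WJWt mulJJ.
by move=> /(congr1 (mulmx (Jform n))); rewrite !mulmxA mulJJ mul1mx mulmx1.
Qed.

Lemma sform_exp W t u v :
  symplectic W -> sform (W ^+ t *m u) (W ^+ t *m v) = sform u v.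
Proof.
move=> /symplectic_trmx WtJW.
have WktJWk : (W ^+ t)^T *m Jform n *m W ^+ t = Jform n.
  elim: t => [|t IHt]; first by rewrite expr0 trmx1 mul1mx mulmx1.
  by rewrite exprSr -mulmxE trmx_mul mulmxA -!(mulmxA W^T) IHt mulmxA WtJW.
by rewrite /sform !trmx_mul mulmxA -!(mulmxA u^T) WktJWk.
Qed.

Lemma symplectic_inverse_power W t :
  symplectic W -> exists2 s, (0 < s)%N & W ^+ (s + t) = 1.
Proof.
move=> WJWt; have [p p_gt0 Wp] : exists2 p, (0 < p)%N & W ^+ p = 1.
  by apply: (@mx_period _ _ W (Jform n *m W^T *m Jform n)); rewrite !mulmxA WJWt mulJJ.
exists (p * t.+1 - t)%N; first by nia.
by rewrite subnK ?exprM ?Wp ?expr1n //; nia.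
Qed.

Lemma sform_exp_adj W s t u v : symplectic W -> W ^+ (s + t) = 1 ->
  sform u (W ^+ t *m v) = sform (W ^+ s *m u) v.
Proof.
by move=> sW Wst; rewrite -(sform_exp s _ _ sW) mulmxA mulmxE -exprD Wst mul1mx.
Qed.

End Symplectic.

Section Supports.
Variable n : nat.
Implicit Types (S T : pred 'I_(2 * n)) (k : 'I_(2 * n)) (u v x y : pvec n).

Lemma supportedP S v : reflect (forall k, ~~ S k -> v k 0 = 0) (supported S v).
Proof.
apply: (iffP forallP) => [v0 k nSk | v0 k]; first exact/eqP/(implyP (v0 k)).
by apply/implyP => nSk; rewrite v0.
Qed.

Lemma supportedW S T v : (forall k, S k -> T k) -> supported S v -> supported T v.
Proof.
move=> sST /supportedP v0; apply/supportedP => k nTk; apply: v0.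
by apply: contra nTk; apply: sST.
Qed.

Lemma supported_delta S k : S k -> supported S (delta_mx k 0).
Proof.
move=> Sk; apply/supportedP => i nSi; rewrite mxE andbT.
by case: eqP nSi => [->|]; rewrite ?Sk.
Qed.

Lemma sform_supported0 S T u v : supported S u -> supported T v ->
  (forall i, S i -> ~~ T (partner i)) -> sform u v = 0.
Proof.
move=> /supportedP u0 /supportedP v0 ST; rewrite sformE big1 // => i _.
have [Si|nSi] := boolP (S i); last by rewrite u0 ?mul0r.
by rewrite v0 ?mulr0 ?ST.
Qed.

Variable a : nat.

(* C is listed second so that [projC_eq0_supported] applies to [V_CR] as to [V_LC]. *)
Definition V_CR v := supported (fun k => inR a k || inC a k) v.

Lemma projCE v k : (projC_mx a *m v) k 0 = if inC a k then v k 0 else 0.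
Proof.
rewrite mxE (bigD1 k) //= mxE eqxx big1 ?addr0 => [|j neq_jk].
  by case: (inC a k); rewrite ?mul1r ?mul0r.
by rewrite mxE eq_sym (negbTE neq_jk) mul0r.
Qed.

Lemma supported_projC v : supported (inC a) (projC_mx a *m v).
Proof. by apply/supportedP => k nCk; rewrite projCE (negbTE nCk). Qed.

Lemma projC_eq0_supported S v :
  supported (fun k => S k || inC a k) v -> projC_mx a *m v = 0 -> supported S v.
Proof.
move=> /supportedP v0 /(congr1 (fun w : pvec n => w^~ 0)) pv0.
apply/supportedP => k nSk; case Ck: (inC a k).
  by have := congr1 (fun w => w k) pv0; rewrite /= projCE Ck mxE.
by apply: v0; rewrite Ck orbF.
Qed.

Lemma sform_LC_R u v : V_LC a u -> V_R a v -> sform u v = 0.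
Proof.
move=> LCu Rv; apply: sform_supported0 LCu Rv _ => i.
by rewrite /inL /inC /inR site_partner -leqNgt => /orP[/ltnW|/eqP->].
Qed.

Lemma sform_projC u v : V_LC a u -> V_CR v ->
  sform u v = sform (projC_mx a *m u) (projC_mx a *m v).
Proof.
move=> /supportedP u0 /supportedP v0; rewrite !sformE; apply: eq_bigr => i _.
rewrite !projCE; have -> : inC a (partner i) = inC a i by rewrite /inC site_partner.
rewrite /inC; have [lt_ia|lt_ai|//] := ltngtP (site i) a.
  by rewrite v0 ?mulr0 // /inR /inC site_partner ltn_eqF // orbF -leqNgt ltnW.
by rewrite u0 ?mul0r // /inL /inC gtn_eqF // orbF -leqNgt ltnW.
Qed.

Lemma inC_cases i k : inC a i -> inC a k -> i = k \/ i = partner k.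
Proof.
by move=> Ci Ck; apply: same_site_cases; move: Ci Ck; rewrite /inC => /eqP-> /eqP->.
Qed.

Lemma sform_C_expand x y k : supported (inC a) x -> inC a k ->
  sform x y = x k 0 * y (partner k) 0 + x (partner k) 0 * y k 0.
Proof.
move=> /supportedP x0 Ck; rewrite sformE (bigD1 k) //= (bigD1 (partner k)) ?partner_neq //=.
rewrite partnerK big1 ?addr0 // => i /andP[neq_ik neq_ipk].
rewrite x0 ?mul0r //; apply: contra neq_ik => Ci.
have [->//|eq_ipk] := inC_cases Ci Ck.
by rewrite eq_ipk eqxx in neq_ipk.
Qed.

Lemma supported_C_eq v w k :
  supported (inC a) v -> supported (inC a) w -> inC a k ->
  v k 0 = w k 0 -> v (partner k) 0 = w (partner k) 0 -> v = w.
Proof.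
move=> /supportedP v0 /supportedP w0 Ck eq_k eq_pk; apply/matrixP => i j; rewrite ord1.
have [Ci|nCi] := boolP (inC a i); last by rewrite v0 ?w0.
by case: (inC_cases Ci Ck) => ->.
Qed.

Lemma supported_C_orth_eq x y : supported (inC a) x -> supported (inC a) y ->
  x != 0 -> y != 0 -> sform x y = 0 -> x = y.
Proof.
move=> Cx Cy nz_x nz_y xy0.
have [k xk] : exists k, x k 0 != 0.
  apply/existsP; apply: contraNT nz_x => /existsPn x0.
  by apply/eqP/matrixP => k j; rewrite ord1 mxE; apply/eqP/negbNE/x0.
have Ck : inC a k by apply: contraNT xk => nCk; move/supportedP: Cx => ->.
have nz_C z : supported (inC a) z -> z != 0 -> (z k 0 != 0) || (z (partner k) 0 != 0).
  move=> Cz; apply: contraNT; rewrite negb_or !negbK => /andP[/eqP zk /eqP zpk].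
  apply/eqP/(supported_C_eq Cz _ Ck); rewrite ?mxE //.
  by apply/supportedP => i _; rewrite mxE.
have xy0_k : x k 0 * y (partner k) 0 + x (partner k) 0 * y k 0 = 0.
  by rewrite -(sform_C_expand y Cx Ck).
have [eq_k eq_pk] := F2_hyperbolic_orth (nz_C x Cx nz_x) (nz_C y Cy nz_y) xy0_k.
exact: supported_C_eq Cx Cy Ck eq_k eq_pk.
Qed.

End Supports.

Section Walls.
Variables (n a : nat) (W : pmat n).
Implicit Types (P Q : pred (pvec n)) (l r u v x y : pvec n).

Definition orbit_span P : {vspace pvec n} :=
  span_of (fun v => exists (t : nat) x, P x /\ v = W ^+ t *m x).

Definition G_internal P : {vspace pvec n} :=
  (linfun (mulmx (projC_mx a)) @: orbit_span P)%VS.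

Lemma mem_G_internal P t x : P x -> projC_mx a *m (W ^+ t *m x) \in G_internal P.
Proof.
move=> Px; have /(memv_img (linfun (mulmx (projC_mx a)))) : W ^+ t *m x \in orbit_span P.
  by apply: memv_span; rewrite mem_enum inE; apply/asboolP; exists t, x.
by rewrite lfunE.
Qed.

Lemma G_internal_supported P y : y \in G_internal P -> supported (inC a) y.
Proof. by case/memv_imgP => u _ ->; rewrite lfunE supported_projC. Qed.

Lemma G_internal_orth P Q :
  (forall s t p q, P p -> Q q ->
     sform (projC_mx a *m (W ^+ s *m p)) (projC_mx a *m (W ^+ t *m q)) = 0) ->
  forall x y, x \in G_internal P -> y \in G_internal Q -> sform x y = 0.
Proof.
move=> orth; rewrite /G_internal /orbit_span /span_of !limg_span.
apply: sform_span_orth => _ _ /mapP[u + ->] /mapP[v + ->].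
rewrite !mem_enum !inE => /asboolP[s [p [Pp ->]]] /asboolP[t [q [Qq ->]]].
by rewrite !lfunE; apply: orth.
Qed.

Hypotheses (sW : symplectic W) (wall : left_wall a W).

Lemma wall_orbit_LC t l : V_L a l -> V_LC a (W ^+ t *m l).
Proof.
case: t => [|t] Ll; last exact: wall.
by rewrite expr0 mul1mx; apply: supportedW Ll => k ->.
Qed.

Lemma wall_orbit_CR t r : V_R a r -> V_CR a (W ^+ t *m r).
Proof.
move=> Rr; apply/supportedP => k; rewrite negb_or => /andP[nRk nCk].
have [s s_gt0 Wst] := symplectic_inverse_power t sW.
rewrite -sform_deltal (sform_exp_adj _ _ sW Wst); apply: sform_LC_R Rr; apply: wall => //.
by apply: supported_delta; move: nRk nCk; rewrite /inL /inR /inC site_partner; lia.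
Qed.

Lemma sform_wall_orbits s t l r :
  V_L a l -> V_R a r -> sform (W ^+ s *m l) (W ^+ t *m r) = 0.
Proof.
move=> Ll Rr; have [k _ Wkt] := symplectic_inverse_power t sW.
rewrite (sform_exp_adj _ _ sW Wkt) mulmxA mulmxE -exprD.
by apply: sform_LC_R Rr; apply: wall_orbit_LC.
Qed.

Lemma G_left_orth_G_right x y :
  x \in G_left a W -> y \in G_right a W -> sform x y = 0.
Proof.
apply: G_internal_orth => s t l r Ll Rr.
by rewrite -sform_projC ?wall_orbit_LC ?wall_orbit_CR ?sform_wall_orbits.
Qed.

Lemma G_left_neq0 :
  ~ (forall t, (1 <= t)%N -> forall l, V_L a l -> V_L a (W ^+ t *m l)) ->
  exists2 x, x \in G_left a W & x != 0.
Proof.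
move=> not_stable; apply: contrapT => G0; apply: not_stable => t t_gt0 l Ll.
apply: projC_eq0_supported (wall t_gt0 Ll) _.
have [//|nz] := eqVneq (projC_mx a *m (W ^+ t *m l)) 0.
by exfalso; apply: G0; exists (projC_mx a *m (W ^+ t *m l)); first exact: mem_G_internal.
Qed.

Lemma G_right_neq0 :
  ~ (forall t, (1 <= t)%N -> forall v, V_LC a v -> V_LC a (W ^+ t *m v)) ->
  exists2 y, y \in G_right a W & y != 0.
Proof.
move=> not_stable; apply: contrapT => G0.
have orbit_R s r : V_R a r -> V_R a (W ^+ s *m r).
  move=> Rr; apply: projC_eq0_supported (wall_orbit_CR s Rr) _.
  have [//|nz] := eqVneq (projC_mx a *m (W ^+ s *m r)) 0.
  by exfalso; apply: G0; exists (projC_mx a *m (W ^+ s *m r)); first exact: mem_G_internal.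
apply: not_stable => t _ v LCv; apply/supportedP => k nLCk.
have [s _ Wst] := symplectic_inverse_power t sW.
rewrite -sform_deltal (sform_exp_adj _ _ sW Wst) sformC.
apply: sform_LC_R LCv (orbit_R _ _ _).
by apply: supported_delta; move: nLCk; rewrite /inL /inC /inR site_partner; lia.
Qed.

End Walls.

Theorem lemma6 (n a : nat) (W : 'M['F_2]_(2 * n)) :
  (3 <= n)%N -> (1 <= a)%N -> (a + 2 <= n)%N ->
  symplectic W ->
  irreducible_wall a W ->
  G_left a W = G_right a W /\ \dim (G_left a W) = 1%N.
Proof.
move=> _ _ _ sW [wall not_L_stable not_LC_stable].
have [x0 Lx0 nz_x0] := G_left_neq0 wall not_L_stable.
have [y0 Ry0 nz_y0] := G_right_neq0 sW wall not_LC_stable.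
have eq_LR x y : x \in G_left a W -> y \in G_right a W -> x != 0 -> y != 0 -> x = y.
  move=> Lx Ry nz_x nz_y; apply: supported_C_orth_eq nz_x nz_y _.
  - exact: G_internal_supported Lx.
  - exact: G_internal_supported Ry.
  - exact: G_left_orth_G_right Lx Ry.
have GL : G_left a W = <[x0]>%VS.
  by apply: vspace_eq_vline => // x Lx nz_x; rewrite (eq_LR x y0) // (eq_LR x0 y0).
have GR : G_right a W = <[x0]>%VS.
  apply: vspace_eq_vline => [|y Ry nz_y]; first by rewrite (eq_LR x0 y0).
  by rewrite (eq_LR x0 y).
by rewrite GL GR dim_vline nz_x0.
Qed.
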